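(* Let $d \ge 2$ and let $a_1, \dots, a_d > 0$ be arbitrary reals. Let \[ S = \left\{ x \in \mathbb{R}^d \,:\, x_1, \dots, x_d \ge 0,\ \frac{x_1}{a_1} + \cdots + \frac{x_d}{a_d} \le 1 \right\}, \] and for every $I \subseteq [d] = \{1, \dots, d\}$ let \[ C_I = \left\{ x \in \mathbb{R}^d \,:\, \sum_{i \in I} \frac{|x_i|}{a_i} \le 1,\ x_j = 0 \text{ for all } j \in [d] \setminus I \right\}. \] Then for every real $t > 0$, \[ \left| tS \cap \mathbb{Z}^d \right| = \frac{1}{2^d} \sum_{I \subseteq [d]} \left| tC_I \cap \mathbb{Z}^d \right|. \]
   Context: For a set $P \subseteq \mathbb{R}^d$ and $t>0$, $tP = \{tx : x \in P\}$, and $|\cdot|$ applied to a set denotes its cardinality. For $I = \emptyset$ the set $C_\emptyset$ is $\{0\}$. *)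

From HB Require Import structures.
From mathcomp Require Import all_boot all_order all_algebra.
From mathcomp Require Import finmap boolp classical_sets cardinality reals.
Set Implicit Arguments. Unset Strict Implicit. Unset Printing Implicit Defensive.
Import Order.TTheory GRing.Theory Num.Theory.
Local Open Scope ring_scope.
Local Open Scope classical_set_scope.
Local Open Scope fset_scope.

(* Points of R^d are row vectors 'rV[R]_d; coordinate i of x is x 0 i
   (coordinates indexed by 'I_d = {0,..,d-1} instead of {1,..,d}). *)

Definition simplexS (R : realType) (d : nat) (a : 'I_d -> R) : set 'rV[R]_d :=
  [set x | (forall i, 0 <= x 0 i) /\ \sum_(i < d) x 0 i / a i <= 1].

Definition crossC (R : realType) (d : nat) (a : 'I_d -> R) (I : {set 'I_d})
    : set 'rV[R]_d :=
  [set x | \sum_(i in I) `|x 0 i| / a i <= 1 /\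
           (forall j, j \notin I -> x 0 j = 0)].

Definition dilate (R : realType) (d : nat) (t : R) (P : set 'rV[R]_d)
    : set 'rV[R]_d := [set t *: x | x in P].

Definition Zlattice (R : realType) (d : nat) : set 'rV[R]_d :=
  [set x | forall i, x 0 i \is a Num.int].

(* |P cap Z^d| (the sets in question are finite). *)
Definition lattice_count (R : realType) (d : nat) (P : set 'rV[R]_d) : nat :=
  #|` fset_set (P `&` @Zlattice R d)%classic |.

From HB Require Import structures.
From mathcomp Require Import all_boot all_order all_algebra.
From mathcomp Require Import finmap boolp classical_sets cardinality reals.
From mathcomp Require Import lra.
Set Implicit Arguments. Unset Strict Implicit. Unset Printing Implicit Defensive.
Import Order.TTheory GRing.Theory Num.Theory.
Local Open Scope ring_scope.

(* Double counting with signs.  A lattice point x of tS together with a set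
   E of coordinates determines the lattice point y of tC_I, where
   I = E ∪ supp x, y_i = x_i for i in E and y_i = -x_i otherwise;
   conversely x = |y| and E = {i in I | y_i >= 0}.  To count, the lattice points of these
   bounded sets are encoded as functions from [d] to a finite box. *)

Lemma card_in_bij {T1 T2 : finType} {A : {set T1}} {B : {set T2}}
    (f : T1 -> T2) (g : T2 -> T1) :
  {in A, forall x, f x \in B} -> {in B, forall y, g y \in A} ->
  {in A, cancel f g} -> {in B, cancel g f} -> #|A| = #|B|.
Proof.
move=> fAB gBA fK gK; have -> : B = f @: A.
  apply/setP => y; apply/idP/imsetP => [yB | [x xA ->]]; last exact: fAB.
  by exists (g y); rewrite ?gK ?gBA.
by rewrite card_in_imset //; apply: can_in_inj fK.
Qed.

Lemma card_imfset_set {T : finType} {U : choiceType} {f : T -> U}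
    (S : {set T}) :
  injective f -> #|` [fset f k | k in S]%fset| = #|S|.
Proof.
move=> f_inj; rewrite card_imfset // cardE; apply/perm_size/uniq_perm.
- exact: enum_finmem_uniq.
- exact: enum_uniq.
- by move=> k; rewrite enum_finmemE.
Qed.

Lemma ler_sum_sub {R : numDomainType} {I : finType} (A : {pred I}) (f : I -> R) :
  (forall i, 0 <= f i) -> \sum_(i in A) f i <= \sum_i f i.
Proof.
move=> f_ge0; rewrite big_mkcond /=.
by apply: ler_sum => i _; case: ifP.
Qed.

Lemma dilateE {R : realType} {d : nat} (t : R) (P : set 'rV[R]_d) :
  t != 0 -> dilate t P = [set x | P (t^-1 *: x)]%classic.
Proof.
move=> t0; apply/seteqP; split => x /=.
- by move=> [y Py <-]; rewrite scalerA mulVf ?scale1r.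
- by move=> Px; exists (t^-1 *: x); rewrite // scalerA divff ?scale1r.
Qed.

Lemma sumr_invM_le1 {R : realFieldType} {I : finType} (A : {pred I})
    (f : I -> R) (t : R) :
  0 < t -> (\sum_(i in A) t^-1 * f i <= 1) = (\sum_(i in A) f i <= t).
Proof. by move=> t_gt0; rewrite -mulr_sumr mulrC ler_pdivrMr ?mul1r. Qed.

Section DilatedPolytopes.
Variables (R : realType) (d : nat) (a : 'I_d -> R) (t : R).
Hypotheses (a_gt0 : forall i, 0 < a i) (t_gt0 : 0 < t).

Definition in_simplex (x : 'rV[R]_d) : bool :=
  [forall i, 0 <= x 0 i] && (\sum_i x 0 i / a i <= t).

Definition in_cross (I : {set 'I_d}) (x : 'rV[R]_d) : bool :=
  [forall j, (j \notin I) ==> (x 0 j == 0)] &&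
  (\sum_(i in I) `|x 0 i| / a i <= t).

Lemma dilate_simplexS : dilate t (simplexS a) = [set x | in_simplex x]%classic.
Proof.
rewrite dilateE ?gt_eqF //; apply/eq_set => x; apply/propext.
have ge0E i : (0 <= (t^-1 *: x) 0 i) = (0 <= x 0 i).
  by rewrite mxE pmulr_rge0 ?invr_gt0.
have sumE : (\sum_i (t^-1 *: x) 0 i / a i <= 1) = (\sum_i x 0 i / a i <= t).
  by under eq_bigr do rewrite mxE -mulrA; apply: sumr_invM_le1.
rewrite /simplexS /in_simplex /= sumE andbC.
split=> [[x_ge0 ->] | /andP[-> /forallP x_ge0]].
  by apply/forallP => i; rewrite -ge0E.
by split=> // i; rewrite ge0E.
Qed.

Lemma dilate_crossC I : dilate t (crossC a I) = [set x | in_cross I x]%classic.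
Proof.
rewrite dilateE ?gt_eqF //; apply/eq_set => x; apply/propext.
have eq0E j : ((t^-1 *: x) 0 j = 0) <-> (x 0 j = 0).
  rewrite mxE; split=> [/eqP|->]; rewrite ?mulr0 //.
  by rewrite mulf_eq0 invr_eq0 gt_eqF // => /eqP.
have sumE : (\sum_(i in I) `|(t^-1 *: x) 0 i| / a i <= 1) =
            (\sum_(i in I) `|x 0 i| / a i <= t).
  under eq_bigr do rewrite mxE normrM gtr0_norm ?invr_gt0 // -mulrA.
  exact: sumr_invM_le1.
rewrite /crossC /in_cross /= sumE andbC.
split=> [[-> supp] | /andP[-> /forallP supp]]; last first.
  by split=> // j /(implyP (supp j)) /eqP /eq0E.
by apply/forallP => j; apply/implyP => /supp /eq0E ->.
Qed.

Lemma in_simplex_crossT x : in_simplex x -> in_cross [set: 'I_d] x.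
Proof.
case/andP => /forallP x_ge0 sum_le; apply/andP; split.
  by apply/forallP => j; rewrite inE.
under eq_bigl do rewrite inE.
by under eq_bigr do rewrite ger0_norm //.
Qed.

Lemma in_cross_norm_le I x i : in_cross I x -> `|x 0 i| <= t * a i.
Proof.
case/andP => /forallP supp sum_le.
have [iI | iNI] := boolP (i \in I); last first.
  by rewrite (eqP (implyP (supp i) iNI)) normr0 mulr_ge0 ?ltW.
rewrite -ler_pdivrMr //; apply: le_trans sum_le.
rewrite (bigD1 i) //= lerDl; apply: sumr_ge0 => j _.
by rewrite divr_ge0 // (ltW (a_gt0 j)).
Qed.

End DilatedPolytopes.

Section LatticeBox.
Variables (R : realType) (d N : nat).

Local Notation box := 'I_(N + N).+1.

(* The box {-N, ..., N}, on which [rev_ord] acts as negation. *)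
Definition boxval (c : box) : R := c%:R - N%:R.

Lemma boxval_inj : injective boxval.
Proof. by move=> c c' /addIr /eqP; rewrite eqr_nat => /eqP /val_inj. Qed.

Lemma boxval_rev c : boxval (rev_ord c) = - boxval c.
Proof.
rewrite /boxval /= subSS natrB ?natrD; last exact: ltn_ord c.
lra.
Qed.

Lemma boxval_int c : boxval c \is a Num.int.
Proof. by rewrite rpredB ?natr_int. Qed.

Lemma boxvalP r : r \is a Num.int -> `|r| <= N%:R -> exists c, boxval c = r.
Proof.
move=> r_int; rewrite ler_norml => /andP[r_ge r_le].
have r_nat : (Num.truncn (r + N%:R))%:R = r + N%:R.
  by apply/eqP; rewrite -natrEtruncn natrEint rpredD ?natr_int //=; lra.
exists (inord (Num.truncn (r + N%:R))).
rewrite /boxval inordK; first by rewrite r_nat; lra.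
by rewrite ltnS truncn_le_nat -addn1 !natrD; lra.
Qed.

Definition boxabs (c : box) : box := if 0 <= boxval c then c else rev_ord c.

Lemma boxval_abs c : boxval (boxabs c) = `|boxval c|.
Proof.
rewrite /boxabs; case: ifP => [c_ge0 | /negbT]; first by rewrite ger0_norm.
by rewrite -ltNge boxval_rev => /ltr0_norm ->.
Qed.

Definition boxrow (k : {ffun 'I_d -> box}) : 'rV[R]_d := \row_i boxval (k i).

Lemma boxrowE k : boxrow k 0 = boxval \o k.
Proof. by apply/funext => i; rewrite mxE. Qed.

Lemma boxrow_inj : injective boxrow.
Proof.
move=> k k' /(congr1 (fun x : 'rV[R]_d => x 0)); rewrite !boxrowE => kk'.
by apply/ffunP => i; apply: boxval_inj; have /= := congr1 (@^~ i) kk'.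
Qed.

Lemma lattice_count_box (p : pred 'rV[R]_d) :
    (forall x, p x -> forall i, `|x 0 i| <= N%:R) ->
  lattice_count [set x | p x]%classic = #|[set k | p (boxrow k)]|.
Proof.
move=> p_bnd; rewrite /lattice_count -(card_imfset_set _ boxrow_inj).
congr (#|` _|); rewrite -[RHS]set_fsetK; congr fset_set.
apply/seteqP; split=> [x [/= px x_int] | _ /imfsetP[k /= + ->]]; last first.
  by rewrite inE => pk; split=> // i; rewrite boxrowE boxval_int.
have /fin_all_exists[k kE] i : exists c, boxval c = x 0 i.
  by apply: boxvalP; [apply: x_int | apply: p_bnd].
have xE : boxrow (finfun k) = x by apply/rowP => i; rewrite mxE ffunE kE.
by apply/imfsetP; exists (finfun k); rewrite ?inE xE.
Qed.

End LatticeBox.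

Section SignedCount.
Variables (R : realType) (d N : nat) (a : 'I_d -> R) (t : R).
Hypothesis a_gt0 : forall i, 0 < a i.

Local Notation box := 'I_(N + N).+1.
Local Notation vec := {ffun 'I_d -> box}.
Local Notation bv := (@boxval R N).

Definition to_cross (p : vec * {set 'I_d}) : {set 'I_d} * vec :=
  (p.2 :|: [set i | bv (p.1 i) != 0],
   [ffun i => if i \in p.2 then p.1 i else rev_ord (p.1 i)]).

Definition of_cross (q : {set 'I_d} * vec) : vec * {set 'I_d} :=
  ([ffun i => boxabs R (q.2 i)], [set i in q.1 | 0 <= bv (q.2 i)]).

Definition simplex_signs : {set vec * {set 'I_d}} :=
  finset.setX [set k | in_simplex a t (boxrow R k)] (powerset [set: 'I_d]).

Definition cross_points : {set {set 'I_d} * vec} :=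
  [set q | in_cross a t q.1 (boxrow R q.2)].

Lemma in_simplex_boxrow k :
  in_simplex a t (boxrow R k) =
  [forall i, 0 <= bv (k i)] && (\sum_i bv (k i) / a i <= t).
Proof. by rewrite /in_simplex boxrowE. Qed.

Lemma in_cross_boxrow I k :
  in_cross a t I (boxrow R k) =
  [forall j, (j \notin I) ==> (bv (k j) == 0)] &&
  (\sum_(i in I) `|bv (k i)| / a i <= t).
Proof. by rewrite /in_cross boxrowE. Qed.

Lemma to_cross_in : {in simplex_signs, forall p, to_cross p \in cross_points}.
Proof.
move=> [k E].
rewrite !inE finset.subsetT andbT in_simplex_boxrow in_cross_boxrow.
case/andP=> /forallP k_ge0 sum_le; apply/andP; split.
  apply/forallP => j; apply/implyP; rewrite /= !inE negb_or negbK ffunE.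
  case/andP => /negbTE -> /eqP kj0.
  by rewrite boxval_rev kj0 oppr0.
rewrite (eq_bigr (fun i => bv (k i) / a i)) => [|i _]; last first.
  by rewrite ffunE; case: ifP => _; rewrite ?boxval_rev ?normrN ger0_norm ?k_ge0.
by apply: le_trans sum_le; apply: ler_sum_sub => i; rewrite divr_ge0 ?k_ge0 ?ltW.
Qed.

Lemma of_cross_in : {in cross_points, forall q, of_cross q \in simplex_signs}.
Proof.
move=> [I y].
rewrite !inE finset.subsetT andbT in_simplex_boxrow in_cross_boxrow /=.
case/andP=> /forallP y_supp sum_le; apply/andP; split.
  by apply/forallP => i; rewrite ffunE boxval_abs.
under eq_bigr do rewrite ffunE boxval_abs.
rewrite (bigID (mem I)) /= [X in _ + X]big1 ?addr0 // => i iNI.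
by rewrite (eqP (implyP (y_supp i) iNI)) normr0 mul0r.
Qed.

Lemma to_crossK : {in simplex_signs, cancel to_cross of_cross}.
Proof.
move=> [k E]; rewrite !inE finset.subsetT andbT in_simplex_boxrow.
case/andP => /forallP k_ge0 _.
congr (_, _).
  apply/ffunP => i; apply: (@boxval_inj R); rewrite !ffunE boxval_abs.
  by case: ifP => _; rewrite ?boxval_rev ?normrN ger0_norm ?k_ge0.
apply/setP => i; rewrite !inE ffunE; case: ifP => _ /=; first exact: k_ge0.
by rewrite boxval_rev oppr_ge0 eq_sym -lt_def ltNge k_ge0.
Qed.

Lemma of_crossK : {in cross_points, cancel of_cross to_cross}.
Proof.
move=> [I y]; rewrite inE in_cross_boxrow /= => /andP[/forallP y_supp _].
congr (_, _).
  apply/setP => i; rewrite !inE ffunE boxval_abs normr_eq0.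
  have [iI | iNI] := boolP (i \in I); first by case: leP => //= /lt_eqF ->.
  by rewrite (eqP (implyP (y_supp i) iNI)) lexx eqxx.
apply/ffunP => i; apply: (@boxval_inj R); rewrite !ffunE !inE.
case: ifP => [/andP[_ /ger0_norm] | /negbT]; rewrite ?boxval_abs //.
rewrite boxval_rev boxval_abs.
rewrite /= negb_and -ltNge => /orP[iNI | /ltr0_norm ->]; last exact: opprK.
by rewrite (eqP (implyP (y_supp i) iNI)) normr0 oppr0.
Qed.

Lemma card_simplex_signs :
  (#|[set k : vec | in_simplex a t (boxrow R k)]| * 2 ^ d)%N =
  \sum_(I : {set 'I_d}) #|[set k : vec | in_cross a t I (boxrow R k)]|.
Proof.
have -> : \sum_(I : {set 'I_d}) #|[set k : vec | in_cross a t I (boxrow R k)]| =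
          #|cross_points|.
  under eq_bigr do rewrite -sum1dep_card.
  by rewrite pair_big_dep /= sum1dep_card.
have -> : (2 ^ d)%N = #|powerset [set: 'I_d]|.
  by rewrite card_powerset cardsT card_ord.
rewrite -cardsX.
exact: card_in_bij to_cross_in of_cross_in to_crossK of_crossK.
Qed.

End SignedCount.

Theorem proposition1 (R : realType) (d : nat) (hd : (2 <= d)%N)
    (a : 'I_d -> R) (ha : forall i, 0 < a i) (t : R) (ht : 0 < t) :
  (lattice_count (dilate t (simplexS a)))%:R =
    (2 ^+ d)^-1 * \sum_(I : {set 'I_d}) (lattice_count (dilate t (crossC a I)))%:R
      :> R.
Proof.
have [N t_a_le] : exists N : nat, forall i, t * a i <= N%:R.
  exists (Num.truncn (t * \sum_i a i)).+1 => i.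
  apply: le_trans (ltW (truncnS_gt _)).
  rewrite ler_wpM2l ?(ltW ht) // (bigD1 i) //= lerDl.
  by apply: sumr_ge0 => j _; apply: ltW.
have cross_bnd I x : in_cross a t I x -> forall i, `|x 0 i| <= N%:R.
  by move=> xI i; apply: le_trans (in_cross_norm_le ha ht i xI) (t_a_le i).
rewrite dilate_simplexS // (lattice_count_box (N := N)); last first.
  by move=> x /in_simplex_crossT; apply: cross_bnd.
under eq_bigr => I _ do
  rewrite dilate_crossC // (lattice_count_box (cross_bnd I)).
rewrite -natr_sum -card_simplex_signs // natrM natrX mulrC mulfK //.
by rewrite expf_neq0 // pnatr_eq0.
Qed.
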